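(* Let $\mathcal{F}$ be a clique tree forest (CTF) in which every clique tree is valid and calibrated. Let $\mathcal{F}'$ be obtained from $\mathcal{F}$ by a finite sequence of the operations (O1)–(O4) described in the context, each applied to the current forest. Then every clique tree of $\mathcal{F}'$ is a valid clique tree.
   Context: All variables are discrete with finite domains; $D_v$ denotes the domain of variable $v$. A clique tree (CT) is a tree whose nodes are cliques (sets of variables) $C_i$, each carrying a nonnegative clique belief $\beta(C_i)$ (a function of the states of the variables in $C_i$). Each edge $(C_i,C_j)$ carries a sepset $S_{i,j}=C_i\cap C_j$ and a nonnegative sepset belief $\mu(S_{i,j})$. A clique tree forest (CTF) is a disjoint collection of clique trees. A CT is valid if every sepset is nonempty and equals the intersection of its two endpoint cliques, and the running intersection property holds: for every variable $v$, the cliques containing $v$ form a connected subtree. A CT is calibrated if for every edge $(C_i,C_j)$ we have $\sum_{C_i\setminus S_{i,j}}\beta(C_i)=\mu(S_{i,j})=\sum_{C_j\setminus S_{i,j}}\beta(C_j)$. The normalization constant of a calibrated CT is $Z=\sum_{C}\beta(C)$, the sum of any one clique belief over all joint states of that clique's variables (for a calibrated tree this does not depend on the clique chosen). A clique $C$ is non-maximal if $C\subseteq C'$ for some neighbouring clique $C'$. The operations are: (O1) Restriction: replace a CT by a connected subtree of it (keeping the beliefs of the retained cliques and sepsets), or delete a CT entirely. (O2) Exact marginalization of a variable $v$: let $ST_v$ be the (connected) subtree of all cliques containing $v$. Replace $ST_v$ by a single clique $C_c=\big(\bigcup_{C\in ST_v}C\big)\setminus\{v\}$ with belief $\beta(C_c)=\sum_{D_v}\frac{\prod_{C\in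 ST_v}\beta(C)}{\prod_{S\in ST_v}\mu(S)}$, where the denominator ranges over the sepsets of edges inside $ST_v$. Every edge joining a clique of $ST_v$ to a clique $N$ outside $ST_v$ is replaced by an edge between $C_c$ and $N$, with the same sepset and sepset belief. (When $ST_v$ is a single clique this is just summing $v$ out of its belief.) (O3) Local marginalization of a variable $v$: choose a nonempty connected subtree $ST_r$ of the cliques containing $v$. Remove $v$ from every clique containing $v$ that is not in $ST_r$, and from every sepset that contains $v$ and is not an edge inside $ST_r$. Each modified clique $C'=C\setminus\{v\}$ gets belief $\beta(C')=\sum_{D_v}\beta(C)$. Each modified sepset $S'=S\setminus\{v\}$ gets belief $\mu(S')=\sum_{D_v}\mu(S)$. The operation is only allowed if no sepset becomes empty, so that the tree stays connected. (O4) Removal of a non-maximal clique: if $C\subseteq C'$ for a neighbour $C'$, delete $C$ and the edge $(C,C')$. Connect each other neighbour $N$ of $C$ to $C'$, with sepset $N\cap C'$ and sepset belief equal to the former belief $\mu(N\cap C)$. *)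

From HB Require Import structures.
From mathcomp Require Import all_boot all_order all_algebra.
From Stdlib Require List.
Set Implicit Arguments. Unset Strict Implicit. Unset Printing Implicit Defensive.
Import Order.TTheory GRing.Theory Num.Theory.
Local Open Scope ring_scope.

(* A joint state of all variables is an assignment; a belief on a set of    *)
(* variables C is represented as a function on full assignments that only  *)
(* depends on the coordinates in C (see [local]).                           *)

Section CliqueTrees.
Variables (V : finType) (D : V -> finType) (R : realFieldType).

Definition assign := {dffun forall v : V, D v}.
Definition belief := assign -> R.

Definition local (C : {set V}) (phi : belief) : Prop :=
  forall x y : assign, (forall v, v \in C -> x v = y v) -> phi x = phi y.

Definition sumout (A : {set V}) (phi : belief) : belief :=
  fun x => \sum_(y : assign | [forall w, (w \notin A) ==> (y w == x w)]) phi y.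

(* Clique trees.  Nodes are identified by natural numbers; an (undirected)
   edge {i,j} is stored under the key (minn i j, maxn i j). Each edge key
   carries a sepset and a sepset belief. *)
Record CT := mkCT {
  nodes : seq nat;
  clq   : nat -> {set V};
  bel   : nat -> belief;
  edges : seq (nat * nat);
  sep   : nat * nat -> {set V};
  smu   : nat * nat -> belief }.

Definition forest := seq CT.

Definition ekey (i j : nat) : nat * nat := (minn i j, maxn i j).

Definition adj (T : CT) (i j : nat) : bool := ekey i j \in edges T.

Definition connected_in (T : CT) (P : pred nat) : Prop :=
  forall i j, i \in nodes T -> j \in nodes T -> P i -> P j ->
    exists p : seq nat, path (fun a b => adj T a b && P b) i p && (last i p == j).

Definition is_tree (T : CT) : Prop :=
  [/\ uniq (nodes T) /\ nodes T != [::], uniq (edges T),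
      all (fun e => ((e.1 < e.2)%N && (e.1 \in nodes T)) && (e.2 \in nodes T)) (edges T),
      connected_in T predT &
      size (edges T) = (size (nodes T)).-1 ].

Definition is_ct (T : CT) : Prop :=
  [/\ is_tree T,
      forall i, i \in nodes T -> local (clq T i) (bel T i) /\ forall x, 0 <= bel T i x
    & forall e, e \in edges T -> local (sep T e) (smu T e) /\ forall x, 0 <= smu T e x].

Definition valid_ct (T : CT) : Prop :=
  [/\ is_tree T,
      forall e, e \in edges T -> sep T e != set0 /\ sep T e = clq T e.1 :&: clq T e.2
    & forall v : V, connected_in T (fun i => v \in clq T i)].

Definition calibrated (T : CT) : Prop :=
  forall e, e \in edges T -> forall x : assign,
    sumout (clq T e.1 :\: sep T e) (bel T e.1) x = smu T e x /\
    sumout (clq T e.2 :\: sep T e) (bel T e.2) x = smu T e x.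

Definition restrict_to (T : CT) (N : seq nat) : CT :=
  mkCT N (clq T) (bel T)
       (filter (fun e => (e.1 \in N) && (e.2 \in N)) (edges T)) (sep T) (smu T).

Definition op_restrict (T T' : CT) : Prop :=
  exists N : seq nat, [/\ N != [::], uniq N, {subset N <= nodes T},
                          connected_in T (mem N) & T' = restrict_to T N].

Section ExactMarg.
Variables (T : CT) (v : V) (c : nat).
Definition inST (i : nat) : bool := (i \in nodes T) && (v \in clq T i).
Definition ST : seq nat := filter inST (nodes T).
Definition ST_edges := filter (fun e => inST e.1 && inST e.2) (edges T).
Definition bnd_edges := filter (fun e => inST e.1 (+) inST e.2) (edges T).
Definition out_end (e : nat * nat) : nat := if inST e.1 then e.2 else e.1.
Definition new_edges := [seq ekey c (out_end e) | e <- bnd_edges].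
Definition old_edge (k : nat * nat) : nat * nat :=
  nth (0%N, 0%N) bnd_edges (find (fun e => ekey c (out_end e) == k) bnd_edges).
Definition is_new (k : nat * nat) : bool := (k.1 == c) || (k.2 == c).

Definition exact_marg : CT :=
  mkCT (c :: filter (predC inST) (nodes T))
       (fun i => if i == c then (\bigcup_(j <- ST) clq T j) :\ v else clq T i)
       (fun i => if i == c then
                   sumout [set v] (fun y => (\prod_(j <- ST) bel T j y) /
                                            (\prod_(e <- ST_edges) smu T e y))
                 else bel T i)
       (filter (fun e => ~~ inST e.1 && ~~ inST e.2) (edges T) ++ new_edges)
       (fun k => if is_new k then sep T (old_edge k) else sep T k)
       (fun k => if is_new k then smu T (old_edge k) else smu T k).
End ExactMarg.

Definition op_exact (T T' : CT) : Prop :=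
  exists (v : V) (c : nat),
    [/\ ST T v != [::], c \notin nodes T & T' = exact_marg T v c].

Section LocalMarg.
Variables (T : CT) (v : V) (STr : seq nat).
Definition in_STr_edge (e : nat * nat) : bool := (e.1 \in STr) && (e.2 \in STr).
Definition lm_clq (i : nat) : {set V} :=
  if (v \in clq T i) && (i \notin STr) then clq T i :\ v else clq T i.
Definition lm_sep (e : nat * nat) : {set V} :=
  if (v \in sep T e) && ~~ in_STr_edge e then sep T e :\ v else sep T e.
Definition local_marg : CT :=
  mkCT (nodes T) lm_clq
       (fun i => if (v \in clq T i) && (i \notin STr)
                 then sumout [set v] (bel T i) else bel T i)
       (edges T) lm_sep
       (fun e => if (v \in sep T e) && ~~ in_STr_edge e
                 then sumout [set v] (smu T e) else smu T e).
End LocalMarg.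

Definition op_local (T T' : CT) : Prop :=
  exists (v : V) (STr : seq nat),
    [/\ STr != [::] /\ {subset STr <= nodes T},
        (forall i, i \in STr -> v \in clq T i),
        connected_in T (mem STr),
        (forall e, e \in edges T -> lm_sep T v STr e != set0)
      & T' = local_marg T v STr].

Section RemoveNonMax.
Variables (T : CT) (i j : nat).  (* remove clique i, contained in neighbour j *)
Definition touches_i (e : nat * nat) : bool := (e.1 == i) || (e.2 == i).
Definition other_end (e : nat * nat) : nat := if e.1 == i then e.2 else e.1.
Definition other_nbrs : seq nat :=
  filter (fun N => N != j) [seq other_end e | e <- filter touches_i (edges T)].
Definition rm_new_edges := [seq ekey N j | N <- other_nbrs].
Definition not_j (k : nat * nat) : nat := if k.1 == j then k.2 else k.1.
Definition remove_nonmax : CT :=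
  mkCT (filter (fun n => n != i) (nodes T))
       (clq T) (bel T)
       (filter (predC touches_i) (edges T) ++ rm_new_edges)
       (fun k => if k \in rm_new_edges then clq T (not_j k) :&: clq T j else sep T k)
       (fun k => if k \in rm_new_edges then smu T (ekey (not_j k) i) else smu T k).
End RemoveNonMax.

Definition op_remove (T T' : CT) : Prop :=
  exists i j : nat,
    [/\ i \in nodes T, j \in nodes T, adj T i j, clq T i \subset clq T j
      & T' = remove_nonmax T i j].

Definition forest_step (F F' : forest) : Prop :=
  exists (F1 F2 : forest) (T : CT),
    F = F1 ++ T :: F2 /\
    (F' = F1 ++ F2 (* (O1): delete the tree *)
     \/ exists T', F' = F1 ++ T' :: F2 /\
        (op_restrict T T' \/ op_exact T T' \/ op_local T T' \/ op_remove T T')).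

Inductive reachable (F : forest) : forest -> Prop :=
  | reach_refl : reachable F F
  | reach_step : forall F1 F2, reachable F F1 -> forest_step F1 F2 -> reachable F F2.

End CliqueTrees.

From HB Require Import structures.
From mathcomp Require Import all_boot all_order all_algebra.
From mathcomp Require Import zify.
From Stdlib Require List.
From Stdlib Require Import ClassicalEpsilon.
Set Implicit Arguments. Unset Strict Implicit. Unset Printing Implicit Defensive.

(* Validity only concerns the tree, the cliques and the sepsets.

   The tool for all four operations is a counting description of subtrees.  Write
   |P| for the number of nodes in a set P and E(P) for the edges with both ends in P.
   In a tree every nonempty P satisfies |E(P)| + 1 <= |P| ([forest_bound]), and P is
   connected iff equality holds ([connected_bound], [connected_of_bound]); both come
   from growing a connected set one node at a time ([subtree_grow]).  Counting edges
   of A, B, A \/ B and A /\ B then shows that two subtrees sharing a node meet in a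
   subtree ([subtree_inter]) and that no edge leads from A \ B to B \ A
   ([subtree_cross]).  Connectivity is carried over to the modified tree along a node
   map sending adjacent nodes to equal or adjacent nodes ([connected_in_image]).
   (O1) keeps a connected node set, which spans |N| - 1 edges; (O3) changes no edge;
   (O4) reroutes the edges at i to its neighbour j, using that a tree has no
   triangles; (O2) contracts the subtree ST of v to one node c, using that every
   outside node has at most one edge into ST, and [subtree_cross] identifies the new
   sepsets. *)

Section Counting.
Variable T : eqType.
Implicit Types (p q : pred T) (s : seq T).

Lemma count_le_in p q s :
  {in s, forall x, p x -> q x} -> count p s <= count q s.
Proof.
move=> pq; rewrite -(@eq_in_count _ (predI p q)) ?sub_count //; first by move=> x /andP[].
by move=> x xs /=; case px: (p x); rewrite //= (pq x xs px).
Qed.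

Lemma count_lt_in p q s x :
  {in s, forall y, p y -> q y} -> x \in s -> q x -> ~~ p x -> count p s < count q s.
Proof.
elim: s => //= y s IH pq; have pq' : {in s, forall z, p z -> q z}.
  by move=> z zs; apply: pq; rewrite inE zs orbT.
rewrite inE => /orP [/eqP-> | xs] qx npx.
  by rewrite qx (negbTE npx) add0n add1n ltnS count_le_in.
have : (p y : nat) <= q y by case: (p y) (pq y (mem_head y s)) => [->|].
have := IH pq' xs qx npx; lia.
Qed.

Lemma count_split p q (r : pred T) s :
  {in s, forall x, (p x : nat) = q x + r x} -> count p s = count q s + count r s.
Proof.
elim: s => //= y s IH pqr; rewrite (pqr y (mem_head y s)) IH; first lia.
by move=> z zs; apply: pqr; rewrite inE zs orbT.
Qed.

Lemma count_ge_list p s l :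
  uniq l -> (forall x, x \in l -> (x \in s) && p x) -> size l <= count p s.
Proof.
move=> ul lsp; rewrite -size_filter; apply: uniq_leq_size => // x /lsp.
by rewrite mem_filter andbC.
Qed.

Lemma count_mem_uniq_sub (N s : seq T) :
  uniq N -> uniq s -> {subset N <= s} -> count (mem N) s = size N.
Proof.
move=> uN us Ns; rewrite -size_filter; apply: perm_size.
apply: uniq_perm; [exact: filter_uniq | exact: uN |].
by move=> x; rewrite mem_filter andb_idr //; apply: Ns.
Qed.

Lemma size_filter_neq s x :
  uniq s -> x \in s -> size (filter (predC1 x) s) = (size s).-1.
Proof. by move=> us xs; rewrite -(rem_filter x us) size_rem. Qed.

End Counting.

Lemma ekeyC i j : ekey i j = ekey j i.
Proof. by rewrite /ekey minnC maxnC. Qed.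

Lemma ekey_ends i j :
  (ekey i j).1 = i /\ (ekey i j).2 = j \/ (ekey i j).1 = j /\ (ekey i j).2 = i.
Proof. by rewrite /ekey /=; case: (leqP i j) => h; [left | right]; lia. Qed.

Lemma ekey_key (e : nat * nat) : e.1 < e.2 -> ekey e.1 e.2 = e.
Proof. by case: e => a b /= ab; rewrite /ekey; congr pair; lia. Qed.

Lemma ekey_lt a b : a != b -> (ekey a b).1 < (ekey a b).2.
Proof. by rewrite /ekey /=; lia. Qed.

Lemma ekey_inj c : injective (ekey c).
Proof. by move=> x y []; case: (leqP c x); case: (leqP c y); lia. Qed.

Lemma ekey_both (P : pred nat) a b : P (ekey a b).1 && P (ekey a b).2 = P a && P b.
Proof. by case: (ekey_ends a b) => -[-> ->]; rewrite // andbC. Qed.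

Lemma ekey_setI (T : finType) (F : nat -> {set T}) a b :
  F (ekey a b).1 :&: F (ekey a b).2 = F a :&: F b.
Proof. by case: (ekey_ends a b) => -[-> ->]; rewrite // setIC. Qed.

Lemma mem_bigcup_seq (T : finType) (s : seq nat) (F : nat -> {set T}) w :
  (w \in \bigcup_(j <- s) F j) = has (fun j => w \in F j) s.
Proof. by elim: s => [|x s IH]; rewrite ?big_nil ?big_cons ?inE //= IH. Qed.

Lemma path_exit (r : rel nat) (X : pred nat) x p :
  path r x p -> X x -> ~~ X (last x p) -> exists a b, [/\ X a, ~~ X b & r a b].
Proof.
elim: p x => [|b p IH] x /=; first by move=> _ ->.
move=> /andP [rxb pb] Xx; case Xb: (X b); first exact: IH.
by move=> _; exists x, b; rewrite Xb.
Qed.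

Section TreeCounting.
Variables (V : finType) (D : V -> finType) (R : realFieldType).
Implicit Types (T : CT D R) (P Q X : pred nat).

Definition edges_wf T : bool :=
  all (fun e : nat * nat => ((e.1 < e.2) && (e.1 \in nodes T)) && (e.2 \in nodes T))
      (edges T).

Definition ncount T P : nat := count P (nodes T).
Definition ecount T P : nat := count (fun e : nat * nat => P e.1 && P e.2) (edges T).

Lemma tree_uniq T : is_tree T -> uniq (nodes T).
Proof. by case=> -[]. Qed.

Lemma tree_edges_uniq T : is_tree T -> uniq (edges T).
Proof. by case. Qed.

Lemma tree_wf T : is_tree T -> edges_wf T.
Proof. by case. Qed.

Lemma edges_wfP T e :
  edges_wf T -> e \in edges T -> [/\ e.1 < e.2, e.1 \in nodes T & e.2 \in nodes T].
Proof. by move=> /allP wf /wf /andP [/andP [-> ->] ->]. Qed.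

Lemma adjC T a b : adj T a b = adj T b a.
Proof. by rewrite /adj ekeyC. Qed.

Lemma adj_edge T e : edges_wf T -> e \in edges T -> adj T e.1 e.2.
Proof. by move=> wf ein; have [lt _ _] := edges_wfP wf ein; rewrite /adj ekey_key. Qed.

Lemma adj_nodes T a b :
  edges_wf T -> adj T a b -> [/\ a \in nodes T, b \in nodes T & a != b].
Proof.
move=> wf /(edges_wfP wf).
by case: (ekey_ends a b) => -[-> ->] [lt -> ->]; rewrite neq_ltn lt ?orbT.
Qed.

Lemma ekey_wf T a b : a != b -> a \in nodes T -> b \in nodes T ->
  ((ekey a b).1 < (ekey a b).2) && ((ekey a b).1 \in nodes T) && ((ekey a b).2 \in nodes T).
Proof. by move=> ab aT bT; rewrite -andbA (ekey_both (mem (nodes T))) /= ekey_lt ?aT ?bT. Qed.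

Lemma ecount_sub T P Q : (forall k, P k -> Q k) -> ecount T P <= ecount T Q.
Proof. by move=> PQ; apply: count_le_in => e _ /andP [/PQ -> /PQ ->]. Qed.

Lemma ncount_add1 T P b : uniq (nodes T) -> b \in nodes T -> ~~ P b ->
  ncount T (fun k => P k || (k == b)) = ncount T P + 1.
Proof.
move=> uN bN nPb; rewrite /ncount (@count_split _ _ P (pred1 b)); last first.
  by move=> k _ /=; case: (eqVneq k b) => [->|]; rewrite ?(negbTE nPb) ?orbF ?addn0.
by rewrite count_uniq_mem // bN.
Qed.

Lemma covered_or_not T P X :
  (exists u, [/\ u \in nodes T, P u & ~~ X u]) \/ {in nodes T, forall u, P u -> X u}.
Proof.
case: (boolP (has (predD P X) (nodes T))) => [/hasP [u uN /andP [nXu Pu]] | /hasPn cov].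
  by left; exists u.
by right => u /cov /nandP [/negPn Xu _ | /negP nPu /nPu].
Qed.

Lemma covered_bound T P X : (forall k, X k -> P k) -> {in nodes T, forall u, P u -> X u} ->
  ecount T X + ncount T P <= ecount T P + ncount T X.
Proof.
move=> XP cov; have nPX : ncount T P <= ncount T X := count_le_in cov.
by have := ecount_sub T XP; lia.
Qed.

Lemma exit_edge T P X r u : edges_wf T -> connected_in T P -> (forall k, X k -> P k) ->
  r \in nodes T -> X r -> u \in nodes T -> P u -> ~~ X u ->
  exists a b, [/\ X a, ~~ X b, b \in nodes T, adj T a b & P b].
Proof.
move=> wf cP XP rN Xr uN Pu nXu.
have [p /andP [pp /eqP pu]] := cP r u rN uN (XP r Xr) Pu.
have nXlast : ~~ X (last r p) by rewrite pu.
have [a [b [Xa nXb /andP [ab Pb]]]] := path_exit pp Xr nXlast.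
by have [_ bN _] := adj_nodes wf ab; exists a, b.
Qed.

(* Growing a nonempty X inside a connected P one node at a time adds at least one
   edge per node: |E(X)| + |P| <= |E(P)| + |X|. *)
Lemma subtree_grow T P r : uniq (nodes T) -> edges_wf T -> connected_in T P ->
  r \in nodes T -> forall n X, ncount T P - ncount T X <= n -> (forall k, X k -> P k) ->
  X r -> ecount T X + ncount T P <= ecount T P + ncount T X.
Proof.
move=> uN wf cP rN; elim=> [|n IH] X Hn XP Xr.
  case: (covered_or_not T P X) => [[u [uT Pu nXu]] | cov]; last exact: covered_bound XP cov.
  have nXP : ncount T X < ncount T P := count_lt_in (fun k _ => XP k) uT Pu nXu.
  lia.
case: (covered_or_not T P X) => [[u [uT Pu nXu]] | cov]; last exact: covered_bound XP cov.
have [a [b [Xa nXb bN ab Pb]]] := exit_edge wf cP XP rN Xr uT Pu nXu.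
pose X' k := X k || (k == b).
have X'P k : X' k -> P k by move=> /orP [/XP | /eqP ->].
have nX' : ncount T X' = ncount T X + 1 by apply: ncount_add1.
have eX' : ecount T X < ecount T X'.
  apply: (count_lt_in (x := ekey a b)) => //.
  - by move=> e _ /andP [X1 X2]; rewrite /X' X1 X2.
  - by rewrite ekey_both /X' Xa eqxx orbT.
  - by rewrite ekey_both (negbTE nXb) andbF.
have measure : ncount T P - ncount T X' <= n by rewrite nX'; move: Hn; clear; lia.
have := IH X' measure X'P (introT orP (or_introl Xr)); rewrite nX'.
by move: eX'; clear; lia.
Qed.

Lemma connected_bound T P r : uniq (nodes T) -> edges_wf T -> connected_in T P ->
  r \in nodes T -> P r -> ncount T P <= ecount T P + 1.
Proof.
move=> uN wf cP rN Pr.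
have rP k : pred1 r k -> P k by move=> /eqP->.
have := subtree_grow uN wf cP rN (leqnn _) rP (eqxx r).
have -> : ncount T (pred1 r) = 1 by rewrite /ncount count_uniq_mem // rN.
have -> : ecount T (pred1 r) = 0.
  rewrite /ecount (@eq_in_count _ _ pred0) ?count_pred0 // => e eE.
  have [lt _ _] := edges_wfP wf eE.
  by apply/negbTE/negP => /andP [/eqP e1 /eqP e2]; move: lt; rewrite e1 e2 ltnn.
lia.
Qed.

Lemma forest_bound T P r : is_tree T -> r \in nodes T -> P r ->
  ecount T P + 1 <= ncount T P.
Proof.
move=> tT rN Pr; have [[uN ne] _ wf cT sizeE] := tT.
have := subtree_grow uN wf cT rN (leqnn _) (fun _ _ => isT) Pr.
rewrite /ecount /ncount !count_predT sizeE.
by case: (nodes T) ne => // x s _ /=; lia.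
Qed.

(* conversely, the bound forces connectivity: otherwise P splits into two parts
   without edges between them, each spanning at most (size - 1) edges *)
Lemma connected_of_bound T P : is_tree T -> ncount T P <= ecount T P + 1 -> connected_in T P.
Proof.
move=> tT Pbound i j iN jN Pi Pj.
pose reach k := exists p, path (fun a b => adj T a b && P b) i p && (last i p == k).
case: (excluded_middle_informative (reach j)) => // unreach; exfalso.
pose K k : bool := if excluded_middle_informative (reach k) then true else false.
have KP k : reflect (reach k) (K k).
  by rewrite /K; case: excluded_middle_informative => ?; constructor.
have reach_adj a b : reach a -> adj T a b -> P b -> reach b.
  move=> [p /andP [pp /eqP pa]] ab Pb; exists (rcons p b).
  by rewrite rcons_path last_rcons pp pa ab Pb eqxx.
pose A k := P k && K k; pose B k := P k && ~~ K k.
have eP : ecount T P = ecount T A + ecount T B.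
  apply: count_split => e eE; have ab := adj_edge (tree_wf tT) eE.
  rewrite /A /B; case P1: (P e.1); case P2: (P e.2); rewrite /= ?andbF //.
  case: (KP e.1) => K1; case: (KP e.2) => K2 //=; exfalso.
  - exact/K2/(reach_adj _ _ K1 ab P2).
  - by apply/K1/(reach_adj _ _ K2 _ P1); rewrite adjC.
have nP : ncount T P = ncount T A + ncount T B.
  by apply: count_split => k _; rewrite /A /B; case: (P k); case: (K k).
have Ai : A i by rewrite /A Pi; apply/KP; exists [::]; rewrite /= eqxx.
have Bj : B j by rewrite /B Pj /=; apply/negP => /KP.
have := forest_bound tT iN Ai.
have := forest_bound tT jN Bj.
lia.
Qed.

Lemma inter_bound T A B k : is_tree T -> connected_in T A -> connected_in T B ->
  k \in nodes T -> A k -> B k ->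
  ncount T (fun k => A k && B k) + ecount T (fun k => A k || B k) <=
  ecount T (fun k => A k && B k)
    + count (fun e : nat * nat => A e.1 && A e.2 || B e.1 && B e.2) (edges T) + 1.
Proof.
move=> tT cA cB kN Ak Bk.
have uN := tree_uniq tT; have wf := tree_wf tT.
have eUI : count (fun e : nat * nat => A e.1 && A e.2 || B e.1 && B e.2) (edges T)
           + ecount T (fun k => A k && B k) = ecount T A + ecount T B.
  rewrite /ecount -(count_predUI (fun e : nat * nat => A e.1 && A e.2)).
  by congr addn; apply: eq_count => e /=; rewrite andbACA.
have nUI : ncount T (fun k => A k || B k) + ncount T (fun k => A k && B k)
           = ncount T A + ncount T B := count_predUI A B (nodes T).
have := connected_bound uN wf cA kN Ak.
have := connected_bound uN wf cB kN Bk.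
have := forest_bound (P := fun k => A k || B k) tT kN (introT orP (or_introl Ak)).
lia.
Qed.

Lemma subtree_inter T A B k : is_tree T -> connected_in T A -> connected_in T B ->
  k \in nodes T -> A k -> B k -> connected_in T (fun k => A k && B k).
Proof.
move=> tT cA cB kN Ak Bk; apply: connected_of_bound => //.
have := inter_bound tT cA cB kN Ak Bk.
have : count (fun e : nat * nat => A e.1 && A e.2 || B e.1 && B e.2) (edges T)
       <= ecount T (fun k => A k || B k).
  by apply: count_le_in => e _ /orP [] /andP [-> ->]; rewrite ?orbT.
lia.
Qed.

Lemma subtree_cross T A B k a b : is_tree T -> connected_in T A -> connected_in T B ->
  k \in nodes T -> A k -> B k -> adj T a b -> A a -> B b -> A b || B a.
Proof.
move=> tT cA cB kN Ak Bk ab Aa Bb; apply/negPn/negP; rewrite negb_or => /andP [nAb nBa].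
have := inter_bound tT cA cB kN Ak Bk.
have : count (fun e : nat * nat => A e.1 && A e.2 || B e.1 && B e.2) (edges T)
       < ecount T (fun k => A k || B k).
  apply: (count_lt_in (x := ekey a b)) => //.
  - by move=> x _ /orP [] /andP [-> ->]; rewrite ?orbT.
  - by case: (ekey_ends a b) => -[-> ->]; rewrite Aa Bb ?orbT.
  - by case: (ekey_ends a b) => -[-> ->]; rewrite (negbTE nAb) (negbTE nBa) ?andbF ?andFb.
have := forest_bound (P := fun k => A k && B k) tT kN (introT andP (conj Ak Bk)).
lia.
Qed.

Lemma connected_in_image T T' Q Q' (f : nat -> nat) : edges_wf T ->
  (forall k, k \in nodes T' -> Q' k -> exists2 k0, (k0 \in nodes T) && Q k0 & f k0 = k) ->
  (forall k, k \in nodes T -> Q k -> Q' (f k)) ->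
  (forall a b, a \in nodes T -> Q a -> Q b -> adj T a b -> f a = f b \/ adj T' (f a) (f b)) ->
  connected_in T Q -> connected_in T' Q'.
Proof.
move=> wf onto fQ fadj cQ x y xN yN Qx Qy.
have [x0 /andP [x0N Qx0] <-] := onto x xN Qx.
have [y0 /andP [y0N Qy0] <-] := onto y yN Qy.
have [p /andP [pp /eqP <-]] := cQ x0 y0 x0N y0N Qx0 Qy0.
elim: p x0 x0N Qx0 pp {Qx xN} => [|b p IH] a aN Qa /=; first by exists [::]; rewrite /= eqxx.
move=> /andP [/andP [ab Qb] pp]; have [_ bN _] := adj_nodes wf ab.
have [q /andP [pq /eqP ql]] := IH b bN Qb pp.
case: (fadj a b aN Qa Qb ab) => [-> | fab]; first by exists q; rewrite pq ql eqxx.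
by exists (f b :: q); rewrite /= fab fQ // pq ql eqxx.
Qed.

Lemma connected_in_ext T P Q : P =1 Q -> connected_in T P -> connected_in T Q.
Proof.
move=> PQ cP i j iN jN Qi Qj; rewrite -!PQ in Qi Qj.
have [p /andP [pp pl]] := cP i j iN jN Qi Qj.
by exists p; rewrite pl andbT -(eq_path (e := fun a b => adj T a b && P b)) // => a b; rewrite PQ.
Qed.

End TreeCounting.

Section Restriction.
Variables (V : finType) (D : V -> finType) (R : realFieldType).
Variables (T : CT D R) (N : seq nat).
Hypotheses (NT : {subset N <= nodes T}) (uN : uniq N).

Lemma restrict_adj a b : a \in N -> b \in N -> adj T a b -> adj (restrict_to T N) a b.
Proof. by move=> aN bN ab; rewrite /adj mem_filter (ekey_both (mem N)) /= aN bN. Qed.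

Lemma restrict_conn Q : edges_wf T ->
  connected_in T (fun k => (k \in N) && Q k) -> connected_in (restrict_to T N) Q.
Proof.
move=> wf; apply: (connected_in_image (f := id)) => //.
- by move=> k kN Qk; exists k; rewrite // NT ?kN.
- by move=> k _ /andP [].
- by move=> a b _ /andP [aN _] /andP [bN _] ab; right; apply: restrict_adj.
Qed.

(* a connected N spans exactly |N| - 1 edges of the tree *)
Lemma restrict_tree : is_tree T -> N != [::] -> connected_in T (mem N) ->
  is_tree (restrict_to T N).
Proof.
move=> tT Nne cN; have wf := tree_wf tT.
have wf' : edges_wf (restrict_to T N).
  apply/allP => e; rewrite mem_filter => /andP [/andP [e1 e2] eE].
  by have [lt _ _] := edges_wfP wf eE; rewrite lt e1 e2.
have cN' : connected_in (restrict_to T N) predT.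
  by apply: restrict_conn => //; apply: connected_in_ext cN => k; rewrite andbT.
split=> //=; first exact: filter_uniq (tree_edges_uniq tT).
have [r rN] : exists r, r \in N by case: N Nne => // r N' _; exists r; exact: mem_head.
set E' := filter _ (edges T).
have lower : size N <= size E' + 1.
  have := connected_bound (T := restrict_to T N) uN wf' cN' rN isT.
  by rewrite /ecount /ncount /= !count_predT.
have upper : size E' + 1 <= size N.
  have := forest_bound (P := mem N) tT (NT rN) rN.
  by rewrite /ecount /ncount size_filter (count_mem_uniq_sub uN (tree_uniq tT) NT).
lia.
Qed.

End Restriction.

(* (O1) preserves validity: the cliques of N containing w form the subtree N /\ T_w *)
Lemma restrict_valid (V : finType) (D : V -> finType) (R : realFieldType) (T T' : CT D R) :
  valid_ct T -> op_restrict T T' -> valid_ct T'.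
Proof.
move=> [tT sepT rip] [N [Nne uN NT cN ->]].
split; first exact: restrict_tree.
- by move=> e; rewrite mem_filter => /andP [_ /sepT].
- move=> w i j iN jN wi wj.
  have cNw := subtree_inter tT cN (rip w) (NT i iN) iN wi.
  exact: (restrict_conn NT (tree_wf tT) cNw).
Qed.

Lemma setI_remove (T : finType) (A B : {set T}) x (p q : bool) :
  (if (x \in A) && p then A :\ x else A) :&: (if (x \in B) && q then B :\ x else B) =
  if (x \in A :&: B) && (p || q) then A :&: B :\ x else A :&: B.
Proof.
rewrite inE; case xA: (x \in A); case xB: (x \in B); case: p; case: q => /=;
  apply/setP => y; rewrite !inE //; case: (eqVneq y x) => [->|] //=; by rewrite ?xA ?xB.
Qed.

(* (O3): local marginalization keeps the tree; sepsets stay intersections because v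
   is removed from a sepset exactly when it is removed from one of its ends *)
Lemma local_valid (V : finType) (D : V -> finType) (R : realFieldType) (T T' : CT D R) :
  valid_ct T -> op_local T T' -> valid_ct T'.
Proof.
move=> [tT sepT rip] [v [STr [_ STr_v cSTr sepne ->]]].
split=> //.
- move=> e eE; split; first exact: sepne.
  rewrite /= /lm_sep /lm_clq /in_STr_edge; have [_ ->] := sepT e eE.
  by rewrite setI_remove negb_and.
- move=> w; case: (eqVneq w v) => [->|wv].
    apply: connected_in_ext cSTr => k /=; rewrite /lm_clq.
    case kS: (k \in STr); first by rewrite /= andbF STr_v.
    by case vk: (v \in clq T k); rewrite /= ?setD11 ?vk.
  apply: connected_in_ext (rip w) => k /=; rewrite /lm_clq.
  by case: ifP; rewrite // !inE wv.
Qed.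

Section Removal.
Variables (V : finType) (D : V -> finType) (R : realFieldType).
Variables (T : CT D R) (i j : nat).
Hypotheses (tT : is_tree T) (iN : i \in nodes T) (jN : j \in nodes T) (aij : adj T i j).

Local Notation T' := (remove_nonmax T i j).
Local Notation ON := (other_nbrs T i j).

Let wf : edges_wf T := tree_wf tT.

Lemma ij_neq : i != j.
Proof. by have [_ _ ->] := adj_nodes wf aij. Qed.

Lemma touching_edge e : e \in edges T -> touches_i i e -> e = ekey i (other_end i e).
Proof.
move=> eE; have [lt _ _] := edges_wfP wf eE.
rewrite /touches_i /other_end => /orP [/eqP e1 | /eqP e2]; first by rewrite e1 eqxx -e1 ekey_key.
have /negbTE -> : e.1 != i by rewrite -e2 neq_ltn lt.
by rewrite -e2 ekeyC ekey_key.
Qed.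

Lemma other_end_ekey N : N != i -> other_end i (ekey i N) = N.
Proof.
by move=> Ni; rewrite /other_end; case: (ekey_ends i N) => -[-> ->]; rewrite ?eqxx ?(negbTE Ni).
Qed.

Lemma touches_ekey N : touches_i i (ekey i N).
Proof. by rewrite /touches_i; case: (ekey_ends i N) => -[-> ->]; rewrite eqxx ?orbT. Qed.

Lemma mem_other_nbrs N : (N \in ON) = (N != j) && adj T i N.
Proof.
rewrite /other_nbrs mem_filter; case: (N != j) => //=; apply/mapP/idP => [[e] | aiN].
  by rewrite mem_filter => /andP [te eE] ->; rewrite /adj -touching_edge.
have [_ _ iN'] := adj_nodes wf aiN.
by exists (ekey i N); rewrite ?mem_filter ?touches_ekey // other_end_ekey // eq_sym.
Qed.

Lemma no_triangle N : N \in ON -> ~~ adj T N j.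
Proof.
rewrite mem_other_nbrs => /andP [Nj aiN]; apply/negP => aNj.
have [_ NT iN'] := adj_nodes wf aiN.
have ue : uniq [:: ekey i j; ekey i N; ekey N j].
  have ij_iN : ekey i j != ekey i N by rewrite (inj_eq (@ekey_inj i)) eq_sym.
  have ij_Nj : ekey i j != ekey N j by rewrite (ekeyC i j) (ekeyC N j) (inj_eq (@ekey_inj j)).
  have iN_Nj : ekey i N != ekey N j by rewrite (ekeyC i N) (inj_eq (@ekey_inj N)) ij_neq.
  by rewrite /= !inE !negb_or ij_iN ij_Nj iN_Nj.
have un : uniq [:: i; j; N] by rewrite /= !inE negb_or ij_neq iN' eq_sym Nj.
have := forest_bound (P := mem [:: i; j; N]) tT iN (mem_head _ _).
have -> : ncount T (mem [:: i; j; N]) = 3.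
  by rewrite /ncount (count_mem_uniq_sub un (tree_uniq tT)) // => k; rewrite !inE => /or3P [] /eqP ->.
have : 3 <= ecount T (mem [:: i; j; N]).
  apply: (count_ge_list ue) => e; rewrite !inE => /or3P [] /eqP ->;
    [case: (ekey_ends i j) | case: (ekey_ends i N) | case: (ekey_ends N j)];
    by move=> -[-> ->]; rewrite !eqxx ?orbT ?andbT.
lia.
Qed.

Lemma other_ends_uniq : uniq [seq other_end i e | e <- filter (touches_i i) (edges T)].
Proof.
rewrite map_inj_in_uniq ?filter_uniq ?tree_edges_uniq // => e e'.
rewrite !mem_filter => /andP [te eE] /andP [te' e'E] ee'.
by rewrite (touching_edge eE te) (touching_edge e'E te') ee'.
Qed.

Lemma size_other_nbrs : size ON = (count (touches_i i) (edges T)).-1.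
Proof.
have j_oe : j \in [seq other_end i e | e <- filter (touches_i i) (edges T)].
  apply/mapP; exists (ekey i j); first by rewrite mem_filter touches_ekey.
  by rewrite other_end_ekey // eq_sym ij_neq.
by rewrite /other_nbrs size_filter_neq ?other_ends_uniq // size_map size_filter.
Qed.

Lemma remove_adj_old a b : a != i -> b != i -> adj T a b -> adj T' a b.
Proof.
rewrite /adj => ai bi ab; rewrite mem_cat mem_filter /= ab andbT /touches_i.
by case: (ekey_ends a b) => -[-> ->]; rewrite (negbTE ai) (negbTE bi).
Qed.

Lemma remove_adj_new N : N \in ON -> adj T' N j.
Proof. by move=> NON; rewrite /adj mem_cat (map_f (fun M => ekey M j) NON) orbT. Qed.

(* paths through i are rerouted through j *)
Lemma remove_conn (Q : pred nat) : (Q i -> Q j) -> connected_in T Q -> connected_in T' Q.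
Proof.
move=> Qij; apply: (connected_in_image (f := fun k => if k == i then j else k)) => //.
- move=> k; rewrite mem_filter => /andP [ki kN] Qk.
  by exists k; rewrite ?kN ?Qk ?(negbTE ki).
- by move=> k _ Qk; case: eqP => [ki | _] //; apply: Qij; rewrite -ki.
- move=> a b _ _ _; case: (eqVneq a i) => [->|ai]; case: (eqVneq b i) => [->|bi] ab.
  + by left.
  + case: (eqVneq b j) => [-> | bj]; first by left.
    by right; rewrite adjC remove_adj_new // mem_other_nbrs bj ab.
  + case: (eqVneq a j) => [-> | aj]; first by left.
    by right; rewrite remove_adj_new // mem_other_nbrs aj adjC ab.
  + by right; apply: remove_adj_old.
Qed.

(* deg(i) edges are replaced by deg(i) - 1 new ones, none of them already present *)
Lemma remove_tree : is_tree T'.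
Proof.
have [[uN _] uE _ cT sizeE] := tT.
have jT' : j \in nodes T' by rewrite mem_filter eq_sym ij_neq jN.
split.
- by split; [exact: filter_uniq | apply/negP => /eqP E; rewrite E in jT'].
- rewrite cat_uniq filter_uniq //=; apply/andP; split.
    apply/hasPn => k /mapP [N NON ->]; rewrite mem_filter negb_and.
    by rewrite [_ \in edges T](negbTE (no_triangle NON)) orbT.
  by rewrite map_inj_in_uniq ?filter_uniq ?other_ends_uniq // => N N' _ _; rewrite ekeyC [ekey N' j]ekeyC => /ekey_inj.
- apply/allP => e; rewrite mem_cat => /orP [].
    rewrite mem_filter /touches_i /= negb_or => /andP [/andP [e1 e2] eE].
    by have [lt e1T e2T] := edges_wfP wf eE; rewrite lt !mem_filter e1 e2 e1T e2T.
  move=> /mapP [N NON ->]; move: (NON); rewrite mem_other_nbrs => /andP [Nj aiN].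
  have [_ NT iN'] := adj_nodes wf aiN.
  by apply: ekey_wf => //; rewrite mem_filter NT andbT eq_sym.
- exact: remove_conn.
- have sizeN' : size (nodes T') = (size (nodes T)).-1 := size_filter_neq uN iN.
  rewrite sizeN' size_cat size_map size_other_nbrs size_filter.
  have : 0 < count (touches_i i) (edges T).
    by rewrite -has_count; apply/hasP; exists (ekey i j); rewrite ?touches_ekey.
  have : count (touches_i i) (edges T) + count (predC (touches_i i)) (edges T)
         = size (edges T) := count_predC _ _.
  lia.
Qed.

End Removal.

Lemma not_j_ekey j N : N != j -> not_j j (ekey N j) = N.
Proof. by move=> Nj; rewrite /not_j; case: (ekey_ends N j) => -[-> ->]; rewrite ?eqxx ?(negbTE Nj). Qed.

(* the new sepset N /\ j contains the old one N /\ i because clique i is inside clique j *)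
Lemma remove_valid (V : finType) (D : V -> finType) (R : realFieldType) (T T' : CT D R) :
  valid_ct T -> op_remove T T' -> valid_ct T'.
Proof.
move=> [tT sepT rip] [i [j [iN jN aij sij ->]]].
split; first exact: remove_tree.
- move=> k kE /=; case: ifP => [/mapP [N NON ->] | knew].
    move: NON; rewrite (@mem_other_nbrs _ _ _ T i j tT) => /andP [Nj aiN].
    rewrite not_j_ekey // (ekey_setI (clq T)); split=> //.
    have [ne_iN sep_iN] := sepT _ aiN.
    have [w] := set0Pn _ ne_iN; rewrite sep_iN (ekey_setI (clq T)) => /setIP [wi wN].
    by apply/set0Pn; exists w; rewrite inE wN (subsetP sij).
  by move: kE; rewrite mem_cat knew orbF mem_filter => /andP [_ /sepT].
- by move=> w; apply: (remove_conn tT) => // /(subsetP sij).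
Qed.

Section ExactMarginalization.
Variables (V : finType) (D : V -> finType) (R : realFieldType).
Variables (T : CT D R) (v : V) (c : nat).
Hypotheses (tT : is_tree T)
  (sepT : forall e, e \in edges T -> sep T e != set0 /\ sep T e = clq T e.1 :&: clq T e.2)
  (rip : forall w : V, connected_in T (fun i => w \in clq T i))
  (STne : ST T v != [::]) (cT : c \notin nodes T).

Local Notation S := (inST T v).
Local Notation T' := (exact_marg T v c).

Let wf : edges_wf T := tree_wf tT.

Lemma ST_witness : exists2 s, s \in nodes T & S s.
Proof.
move: STne; rewrite /ST; case E: (filter _ _) => [|s l] // _.
have : s \in filter S (nodes T) by rewrite E mem_head.
by rewrite mem_filter => /andP [Ss sN]; exists s.
Qed.

Lemma ST_conn : connected_in T S.
Proof.
move=> x y xN yN /andP [_ vx] /andP [_ vy].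
have [p /andP [pp pl]] := @rip v x y xN yN vx vy.
exists p; rewrite pl andbT; apply: sub_path pp => a b /andP [ab vb].
by have [_ bN _] := adj_nodes wf ab; rewrite ab /inST bN vb.
Qed.

Lemma ST_count : ncount T S = ecount T S + 1.
Proof.
have [s sN Ss] := ST_witness.
have := connected_bound (tree_uniq tT) wf ST_conn sN Ss.
have := forest_bound tT sN Ss.
lia.
Qed.

Lemma out_end_ekey a b : S a -> ~~ S b -> out_end T v (ekey a b) = b.
Proof.
by move=> Sa nSb; rewrite /out_end; case: (ekey_ends a b) => -[-> ->]; rewrite ?Sa ?(negbTE nSb).
Qed.

Lemma boundary_edge e : e \in bnd_edges T v ->
  exists2 s, S s & [/\ e \in edges T, ~~ S (out_end T v e) & e = ekey s (out_end T v e)].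
Proof.
rewrite mem_filter => /andP [xS eE]; have [lt _ _] := edges_wfP wf eE.
move: xS; rewrite /out_end; case S1: (S e.1); case S2: (S e.2) => //= _.
  by exists e.1; rewrite ?S2 ?ekey_key.
by exists e.2; rewrite ?S1 // ekeyC ekey_key.
Qed.

Lemma boundary_of a b : S a -> ~~ S b -> adj T a b -> ekey a b \in bnd_edges T v.
Proof.
move=> Sa nSb ab; rewrite mem_filter andbC; apply/andP; split=> //.
by case: (ekey_ends a b) => -[-> ->]; rewrite Sa (negbTE nSb).
Qed.

Lemma boundary_inj e e' : e \in bnd_edges T v -> e' \in bnd_edges T v ->
  out_end T v e = out_end T v e' -> e = e'.
Proof.
move=> eB e'B same_out; apply/eqP; apply: contraT => ee'.
have [s Ss [eE nSo Ee]] := boundary_edge eB.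
have [s' Ss' [e'E _ Ee']] := boundary_edge e'B.
move: same_out nSo Ee Ee'; set o := out_end T v e; move=> same_out nSo Ee; rewrite -same_out => Ee'.
have [_ oN _] : [/\ s \in nodes T, o \in nodes T & s != o] by apply: adj_nodes wf _; rewrite /adj -Ee.
pose P k := S k || (k == o).
have nP : ncount T P = ncount T S + 1 := ncount_add1 (tree_uniq tT) oN nSo.
have eP : ecount T S + 2 <= ecount T P.
  have new_edge f s0 : f \in edges T -> S s0 -> f = ekey s0 o ->
      [&& f \in edges T, P f.1 && P f.2 & ~~ (S f.1 && S f.2)].
    move=> fE Ss0 fkey; rewrite fE /= fkey (ekey_both P) (ekey_both S).
    by rewrite /P Ss0 eqxx orbT (negbTE nSo) andbF.
  rewrite /ecount (@count_split _ (fun f : nat * nat => P f.1 && P f.2)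
    (fun f : nat * nat => S f.1 && S f.2)
    (fun f : nat * nat => (P f.1 && P f.2) && ~~ (S f.1 && S f.2))); last first.
    by move=> f _; rewrite /P; case: (S f.1); case: (S f.2); case: (f.1 == o); case: (f.2 == o).
  rewrite leq_add2l; apply: (@count_ge_list _ _ _ [:: e; e']); first by rewrite /= inE andbT.
  move=> f; rewrite !inE => /orP [] /eqP ->; [exact: new_edge eE Ss Ee | exact: new_edge e'E Ss' Ee'].
have := forest_bound tT oN (introT orP (or_intror (eqxx o))) (P := P).
by rewrite nP ST_count; move: eP; clear; lia.
Qed.

Lemma old_edge_spec e : e \in bnd_edges T v ->
  let k := ekey c (out_end T v e) in
  old_edge T v c k \in bnd_edges T v /\ out_end T v (old_edge T v c k) = out_end T v e.
Proof.
move=> eB k.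
have hk : has (fun f => ekey c (out_end T v f) == k) (bnd_edges T v) by apply/hasP; exists e.
split; first by rewrite /old_edge mem_nth // -has_find.
by have /eqP/ekey_inj := nth_find (0%N, 0%N) hk.
Qed.

(* The sepset of a boundary edge {s, o} is what the merged clique shares with o:
   a variable w of o lying in some clique of ST lies in s, since the subtrees of v
   and of w meet and no edge leaves one for the other. *)
Lemma sep_boundary s o : S s -> ~~ S o -> adj T s o ->
  clq T s :&: clq T o = (\bigcup_(j <- ST T v) clq T j :\ v) :&: clq T o.
Proof.
move=> Ss nSo so; have [sN oN _] := adj_nodes wf so.
have vo : v \notin clq T o by move: nSo; rewrite /inST oN.
have vs : v \in clq T s by case/andP: Ss.
apply/setP => w; rewrite !inE mem_bigcup_seq; case wo: (w \in clq T o); rewrite ?andbF ?andbT //.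
have wv : w != v by apply: contraNneq vo => <-.
rewrite wv /=; apply/idP/hasP => [ws | [j0]].
  by exists s; rewrite // /ST mem_filter Ss.
rewrite /ST mem_filter => /andP [/andP [j0N vj0] _] wj0.
have := subtree_cross tT (@rip w) (@rip v) j0N wj0 vj0 _ wo vs.
by rewrite (negbTE vo) orbF adjC; apply.
Qed.

Lemma exact_adj_old a b : ~~ S a -> ~~ S b -> adj T a b -> adj T' a b.
Proof.
rewrite /adj => nSa nSb ab; rewrite mem_cat mem_filter ab andbT.
by case: (ekey_ends a b) => -[-> ->]; rewrite nSa nSb.
Qed.

Lemma exact_adj_new a b : S a -> ~~ S b -> adj T a b -> adj T' c b.
Proof.
move=> Sa nSb ab; rewrite /adj mem_cat -(out_end_ekey Sa nSb).
by rewrite (map_f (fun e => ekey c (out_end T v e)) (boundary_of Sa nSb ab)) orbT.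
Qed.

Lemma exact_conn (Q Q' : pred nat) :
  (forall k, k \in nodes T' -> Q' k ->
     exists2 k0, (k0 \in nodes T) && Q k0 & (if S k0 then c else k0) = k) ->
  (forall k, k \in nodes T -> Q k -> Q' (if S k then c else k)) ->
  connected_in T Q -> connected_in T' Q'.
Proof.
move=> onto fQ; apply: (connected_in_image (f := fun k => if S k then c else k) wf onto fQ).
move=> a b _ _ _ ab.
case Sa: (S a); case Sb: (S b) => /=; [by left | right | right | right].
- by apply: (exact_adj_new (a := a)); rewrite ?Sa ?Sb.
- by rewrite adjC; apply: (exact_adj_new (a := b)); rewrite ?Sa ?Sb // adjC.
- by apply: exact_adj_old; rewrite ?Sa ?Sb.
Qed.

(* the |ST| nodes and |ST| - 1 inner edges of ST are replaced by the single node c *)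
Lemma exact_tree : is_tree T'.
Proof.
have [[uN _] uE _ cTree sizeE] := tT.
have c_key e : ekey c (out_end T v e) \notin edges T.
  apply/negP => /(edges_wfP wf) [_].
  by case: (ekey_ends c (out_end T v e)) => -[-> ->] => [cN _ | _ cN]; move: cT; rewrite cN.
split.
- by rewrite /= mem_filter (negbTE cT) andbF filter_uniq.
- rewrite cat_uniq filter_uniq //=; apply/andP; split.
    by apply/hasPn => k /mapP [e _ ->]; rewrite mem_filter negb_and c_key orbT.
  rewrite map_inj_in_uniq ?filter_uniq // => e e' eB e'B /ekey_inj.
  exact: boundary_inj.
- apply/allP => e; rewrite mem_cat => /orP [].
    rewrite mem_filter => /andP [/andP [nS1 nS2] eE].
    by have [lt e1N e2N] := edges_wfP wf eE; rewrite lt !inE !mem_filter /= e1N e2N nS1 nS2 !orbT.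
  move=> /mapP [e0 eB ->]; have [s Ss [eE nSo Ee]] := boundary_edge eB.
  have [_ oN _] : [/\ s \in nodes T, out_end T v e0 \in nodes T & s != out_end T v e0].
    by apply: adj_nodes wf _; rewrite /adj -Ee.
  apply: ekey_wf; rewrite ?inE ?mem_filter /= ?eqxx ?oN ?nSo ?orbT //.
  by apply: contraNneq cT => ->.
- apply: (exact_conn (Q := predT) _ _ cTree) => // k.
  rewrite inE mem_filter => /orP [/eqP -> _ | /andP [nSk kN] _].
    by have [s sN Ss] := ST_witness; exists s; rewrite ?sN ?Ss.
  by exists k; rewrite ?kN ?(negbTE nSk).
- have sizeN' : size (nodes T') = (count (predC S) (nodes T)).+1 by rewrite /= size_filter.
  have sizeE' : size (edges T') = count (fun e : nat * nat => ~~ S e.1 && ~~ S e.2) (edges T)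
                                  + count (fun e : nat * nat => S e.1 (+) S e.2) (edges T).
    by rewrite size_cat size_map !size_filter.
  have splitN : count S (nodes T) + count (predC S) (nodes T) = size (nodes T).
    exact: count_predC.
  have splitE : size (edges T) = ecount T S
      + count (fun e : nat * nat => ~~ S e.1 && ~~ S e.2) (edges T)
      + count (fun e : nat * nat => S e.1 (+) S e.2) (edges T).
    rewrite -count_predT -addnA -(@count_split _ (fun e : nat * nat => ~~ (S e.1 && S e.2))).
      by apply: count_split => e _; case: (S e.1); case: (S e.2).
    by move=> e _; case: (S e.1); case: (S e.2).
  have countS : count S (nodes T) = ecount T S + 1 := ST_count.
  rewrite sizeE' sizeN' /=; lia.
Qed.

(* new sepsets are those of the boundary edges, i.e. intersections by [sep_boundary];
   v occurs in no clique any more, and the cliques containing w != v still form a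
   subtree *)
Lemma exact_marg_valid : valid_ct T'.
Proof.
have node_c k : k \in nodes T -> (k == c) = false.
  by move=> kN; apply/negbTE; apply: contraNneq cT => <-.
split; first exact: exact_tree.
- move=> k; rewrite mem_cat => /orP [].
    rewrite mem_filter => /andP [_ kE]; have [_ k1N k2N] := edges_wfP wf kE.
    by rewrite /= /is_new !node_c //; exact: sepT.
  move=> /mapP [e eB ->]; have [e'B same_out] := old_edge_spec eB.
  move: e'B same_out; set e' := old_edge _ _ _ _; set o := out_end T v e => e'B same_out.
  have [s Ss [e'E nSo Ee']] := boundary_edge e'B; rewrite same_out in nSo Ee'.
  have so : adj T s o by rewrite /adj -Ee'.
  have [_ oN _] := adj_nodes wf so.
  have [e'ne sep_e'] := sepT e'E.
  have sep_new : sep T' (ekey c o) = sep T e'.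
    by rewrite /= /is_new; case: (ekey_ends c o) => [[-> _] | [_ ->]]; rewrite eqxx ?orbT.
  have clq_new : clq T' (ekey c o).1 :&: clq T' (ekey c o).2
                 = (\bigcup_(j <- ST T v) clq T j :\ v) :&: clq T o.
    by rewrite (ekey_setI (clq T')) /= eqxx node_c.
  rewrite clq_new sep_new; split=> //.
  by rewrite sep_e' Ee' (ekey_setI (clq T)) sep_boundary.
- move=> w; case: (eqVneq w v) => [-> | wv].
    move=> x y; rewrite inE mem_filter => /orP [/eqP -> | /andP [nSx xN]] _ /=.
      by rewrite eqxx setD11.
    by rewrite node_c // => vx; move: nSx; rewrite /= /inST xN vx.
  apply: (exact_conn (Q := fun k => w \in clq T k)) (@rip w) => k.
    rewrite inE mem_filter => /orP [/eqP -> | /andP [nSk kN]] /=.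
      rewrite eqxx !inE wv mem_bigcup_seq => /hasP [j0].
      by rewrite /ST mem_filter => /andP [Sj0 j0N] wj0; exists j0; rewrite ?j0N ?Sj0.
    by rewrite node_c // => wk; exists k; rewrite ?kN ?wk ?(negbTE nSk).
  move=> kN wk; case Sk: (S k); rewrite /= ?eqxx ?node_c //.
  by rewrite !inE wv mem_bigcup_seq; apply/hasP; exists k; rewrite // /ST mem_filter Sk.
Qed.

End ExactMarginalization.

Lemma exact_valid (V : finType) (D : V -> finType) (R : realFieldType) (T T' : CT D R) :
  valid_ct T -> op_exact T T' -> valid_ct T'.
Proof. by move=> [tT sepT rip] [v [c [STne cT ->]]]; apply: exact_marg_valid. Qed.

Lemma step_valid (V : finType) (D : V -> finType) (R : realFieldType) (T T' : CT D R) :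
  valid_ct T ->
  op_restrict T T' \/ op_exact T T' \/ op_local T T' \/ op_remove T T' -> valid_ct T'.
Proof.
move=> vT [op | [op | [op | op]]].
- exact: restrict_valid vT op.
- exact: exact_valid vT op.
- exact: local_valid vT op.
- exact: remove_valid vT op.
Qed.

(* Proposition 1: only the validity of the initial trees is needed *)
Theorem proposition1 (V : finType) (D : V -> finType) (R : realFieldType)
    (F F' : forest D R) :
  List.Forall (fun T => is_ct T /\ valid_ct T /\ calibrated T) F ->
  reachable F F' ->
  List.Forall (fun T => valid_ct T) F'.
Proof.
move=> F_ok reach_F'.
have F_valid : List.Forall (fun T => valid_ct T) F.
  by apply: List.Forall_impl F_ok => T [_ []].
elim: reach_F' => // F1 F2 _ IH [G1 [G2 [T [F1E step]]]].
subst F1; move/List.Forall_app: IH => [G1_valid /List.Forall_cons_iff [vT G2_valid]].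
case: step => [-> | [T' [-> op]]]; apply/List.Forall_app; split=> //.
by constructor; first exact: step_valid vT op.
Qed.
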